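(* Let $M_n=(Q,\Sigma,\Delta,Q_\alpha,F)$ be a simple NFA. Then the DFA $M_d=\mathrm{SubsetConstruction}(M_n)$ is minimal, i.e. no DFA with fewer states recognizes the same language as $M_d$.
   Context: An NFA is a tuple $M=(Q,\Sigma,\Delta,Q_\alpha,F)$ where $Q$ is a finite set of states, $\Sigma$ a finite alphabet, $\Delta:Q\times\Sigma\to\mathcal{P}(Q)$ the transition function, $Q_\alpha\subseteq Q$ the set of start states and $F\subseteq Q$ the set of accepting states. $\Delta$ is extended to strings by $\hat\Delta(q,\varepsilon)=\{q\}$ and $\hat\Delta(q,\sigma s)=\bigcup_{p\in\Delta(q,\sigma)}\hat\Delta(p,s)$ for $\sigma\in\Sigma$, $s\in\Sigma^*$. The language of a state $q$ is $\mathcal{L}(q)=\{s\in\Sigma^*:\hat\Delta(q,s)\cap F\neq\emptyset\}$, and for $Q'\subseteq Q$, $\mathcal{L}(Q')=\bigcup_{q\in Q'}\mathcal{L}(q)$; $M$ recognizes $\mathcal{L}(Q_\alpha)$. A state $q$ is accessible if $q\in\hat\Delta(q_\alpha,s)$ for some $q_\alpha\in Q_\alpha$ and $s\in\Sigma^*$. An NFA is called simple if all its states are accessible and the languages $\mathcal{L}(q)$, $q\in Q$, are non-empty and pairwise disjoint. $\mathrm{SubsetConstruction}(M)$ denotes the DFA obtained by the subset construction with inaccessible states removed: its states are the subsets of $Q$ of the form $\hat\delta(Q_\alpha,s)$, $s\in\Sigma^*$, where $\delta(Q',\sigma)=\bigcup_{q\in Q'}\Delta(q,\sigma)$ (extended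 to strings in the usual way); its start state is $Q_\alpha$, its transition function is $\delta$, and its accepting states are those subsets $Q'$ with $Q'\cap F\neq\emptyset$. It recognizes the same language as $M$. *)

From Stdlib Require Import ClassicalDescription.
From mathcomp Require Import all_boot.
Set Implicit Arguments. Unset Strict Implicit. Unset Printing Implicit Defensive.

Record nfa (Sigma : finType) := Nfa {
  nstate : finType;
  ntrans : nstate -> Sigma -> {set nstate};
  nstart : {set nstate};
  nfinal : {set nstate} }.

Record dfa (Sigma : finType) := Dfa {
  dstate : finType;
  dstart : dstate;
  dtrans : dstate -> Sigma -> dstate;
  dfinal : {set dstate} }.

Section Automata.
Variable Sigma : finType.

Fixpoint nhat (M : nfa Sigma) (q : nstate M) (s : seq Sigma) : {set nstate M} :=
  match s with
  | [::] => [set q]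
  | a :: s' => \bigcup_(p in ntrans q a) nhat p s'
  end.

Definition state_lang (M : nfa Sigma) (q : nstate M) (s : seq Sigma) : Prop :=
  nhat q s :&: nfinal M != set0.

Definition set_lang (M : nfa Sigma) (Q' : {set nstate M}) (s : seq Sigma) : Prop :=
  exists2 q, q \in Q' & state_lang q s.

Definition nfa_lang (M : nfa Sigma) := set_lang (nstart M).

Definition accessible (M : nfa Sigma) (q : nstate M) : Prop :=
  exists2 q0, q0 \in nstart M & exists s, q \in nhat q0 s.

Definition simple_nfa (M : nfa Sigma) : Prop :=
  [/\ forall q : nstate M, accessible q,
      forall q : nstate M, exists s, state_lang q s &
      forall q p : nstate M, q <> p -> forall s, ~ (state_lang q s /\ state_lang p s)].

Definition dhat (A : dfa Sigma) (x : dstate A) (s : seq Sigma) := foldl (@dtrans _ A) x s.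
Definition dfa_lang (A : dfa Sigma) (s : seq Sigma) : Prop := dhat (dstart A) s \in dfinal A.

Definition minimal_dfa (A : dfa Sigma) : Prop :=
  forall B : dfa Sigma, (forall s, dfa_lang B s <-> dfa_lang A s) ->
    ~ (#|dstate B| < #|dstate A|).

Definition sdelta (M : nfa Sigma) (X : {set nstate M}) (a : Sigma) : {set nstate M} :=
  \bigcup_(q in X) ntrans q a.
Definition sdelta_hat (M : nfa Sigma) (X : {set nstate M}) (s : seq Sigma) :=
  foldl (@sdelta M) X s.

Definition reach_states (M : nfa Sigma) : {set {set nstate M}} :=
  [set X | is_left (excluded_middle_informative (exists s, X = sdelta_hat (nstart M) s))].

Lemma reach_statesP (M : nfa Sigma) X :
  X \in reach_states M <-> exists s, X = sdelta_hat (nstart M) s.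
Proof.
rewrite inE; case: excluded_middle_informative => /= H; split=> //; try (by move=> H'; case: (H H')).
Qed.

Lemma reach_start (M : nfa Sigma) : nstart M \in reach_states M.
Proof. by apply/reach_statesP; exists [::]. Qed.

Lemma reach_step (M : nfa Sigma) X a :
  X \in reach_states M -> sdelta X a \in reach_states M.
Proof.
move/reach_statesP=> [s ->]; apply/reach_statesP; exists (rcons s a).
by rewrite /sdelta_hat foldl_rcons.
Qed.

Definition subset_state (M : nfa Sigma) : finType :=
  {X : {set nstate M} | X \in reach_states M}.

Definition SubsetConstruction (M : nfa Sigma) : dfa Sigma :=
  @Dfa Sigma (subset_state M)
    (exist _ (nstart M) (reach_start M))
    (fun X a => exist _ (sdelta (val X) a) (reach_step a (valP X)))
    [set X : subset_state M | val X :&: nfinal M != set0].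

End Automata.

(* Every state of the subset automaton is reached, so it is minimal as soon as
   distinct states have distinct residual languages. The residual language of a
   subset X is L(X), and for a simple NFA L(X) determines X: a state q in X has
   a witness s in L(q), and any state of Y accepting s must be q itself, since
   the state languages are pairwise disjoint. *)
From mathcomp Require Import all_boot.
Set Implicit Arguments. Unset Strict Implicit. Unset Printing Implicit Defensive.

Section DfaMinimality.
Variable Sigma : finType.

Lemma dhat_cat (A : dfa Sigma) (x : dstate A) u v :
  dhat x (u ++ v) = dhat (dhat x u) v.
Proof. exact: foldl_cat. Qed.

Lemma minimal_dfa_reachable_separated (A : dfa Sigma) :
  (forall x : dstate A, exists w, dhat (dstart A) w == x) ->
  (forall x y : dstate A,
     (forall s, dhat x s \in dfinal A <-> dhat y s \in dfinal A) -> x = y) ->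
  minimal_dfa A.
Proof.
move=> reachA separatedA B eqLBA ltBA.
pose w (x : dstate A) := xchoose (reachA x).
have wP x : dhat (dstart A) (w x) = x by apply/eqP/(xchooseP (reachA x)).
pose f (x : dstate A) := dhat (dstart B) (w x).
have f_inj : injective f.
  move=> x y fxy; apply: separatedA => s.
  have residual z : dhat z s \in dfinal A <-> dhat (f z) s \in dfinal B.
    by rewrite -[z in dhat z]wP -!dhat_cat; exact: iff_sym (eqLBA (w z ++ s)).
  by rewrite !residual fxy.
by move: (leq_card f f_inj); rewrite leqNgt ltBA.
Qed.

End DfaMinimality.

Section SubsetConstruction.
Variables (Sigma : finType) (M : nfa Sigma).

Lemma mem_sdelta_hat (X : {set nstate M}) s x :
  x \in sdelta_hat X s <-> exists2 q, q \in X & x \in nhat q s.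
Proof.
elim: s X => [|a s IH] X /=.
  split=> [xX|[q qX]]; first by exists x; rewrite ?inE.
  by rewrite inE => /eqP ->.
rewrite /sdelta_hat /= -/(sdelta_hat _ _) IH; split.
  by case=> p /bigcupP [q qX pq] xp; exists q => //; apply/bigcupP; exists p.
by case=> q qX /bigcupP [p pq xp]; exists p => //; apply/bigcupP; exists q.
Qed.

Lemma sdelta_hat_final (X : {set nstate M}) s :
  sdelta_hat X s :&: nfinal M != set0 <-> set_lang X s.
Proof.
split.
  case/set0Pn=> x /setIP [/mem_sdelta_hat [q qX xq] xF].
  by exists q => //; apply/set0Pn; exists x; apply/setIP.
case=> q qX /set0Pn [x /setIP [xq xF]].
by apply/set0Pn; exists x; apply/setIP; split=> //; apply/mem_sdelta_hat; exists q.
Qed.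

Lemma val_dhat_subset (X : dstate (SubsetConstruction M)) s :
  val (dhat X s) = sdelta_hat (val X) s.
Proof. by elim: s X => [|a s IH] X //=; rewrite /dhat /= -/(dhat _ _) IH. Qed.

Lemma subset_state_reachable (X : dstate (SubsetConstruction M)) :
  exists w, dhat (dstart (SubsetConstruction M)) w == X.
Proof.
have [w Xw] := proj1 (reach_statesP (val X)) (valP X).
by exists w; rewrite -val_eqE val_dhat_subset Xw.
Qed.

Lemma subset_state_final (X : dstate (SubsetConstruction M)) s :
  dhat X s \in dfinal (SubsetConstruction M) <-> set_lang (val X) s.
Proof. by rewrite inE val_dhat_subset; apply: sdelta_hat_final. Qed.

Hypothesis lang_nonempty : forall q : nstate M, exists s, state_lang q s.
Hypothesis lang_disjoint : forall q p : nstate M, q <> p ->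
  forall s, ~ (state_lang q s /\ state_lang p s).

Lemma set_lang_subset (X Y : {set nstate M}) :
  (forall s, set_lang X s -> set_lang Y s) -> X \subset Y.
Proof.
move=> XY; apply/subsetP=> q qX.
have [s qs] := lang_nonempty q.
have [p pY ps] := XY s (ex_intro2 _ _ q qX qs).
have [-> //|/eqP qp] := eqVneq q p.
by case: (lang_disjoint qp (conj qs ps)).
Qed.

Lemma set_lang_inj (X Y : {set nstate M}) :
  (forall s, set_lang X s <-> set_lang Y s) -> X = Y.
Proof.
move=> XY; apply/eqP; rewrite eqEsubset.
by rewrite !set_lang_subset // => s /XY.
Qed.

End SubsetConstruction.

Theorem mainTheorem1 (Sigma : finType) (Mn : nfa Sigma) :
  simple_nfa Mn -> minimal_dfa (SubsetConstruction Mn).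
Proof.
case=> _ lang_nonempty lang_disjoint.
apply: minimal_dfa_reachable_separated; first exact: subset_state_reachable.
move=> X Y XY; apply/val_inj/(set_lang_inj lang_nonempty lang_disjoint) => s.
by rewrite -!subset_state_final.
Qed.
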